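(* Let $G=(V,E)$ be a finite connected graph, $p$ a probability vector on $V$ with $p(i)>0$ for all $i$, and $M$ the transition matrix of the Markov chain on $S=(-\mathbb{N}_0)^V$ which moves from $x$ to $T_ix$ with probability $p(i)$. For each $i\in V$ fix an $i$-ordering, let $S_1=\{x^{(i)}:i\in V\}$, let $s=3(|V|-1)$, and let $\alpha'>0$ be such that $\inf_{x\in S,x'\in S_1}M^s(x,x')\ge\alpha'$. Let $\pi$ be an invariant probability distribution of $M$. Then for every $x\in S$, $$\|M^s(x,\cdot)-\pi\|_{TV}\le 1-(\alpha')^2|V|.$$
   Context: For $x\in S$ and $i\in V$, $T_ix\in S$ is obtained by first setting $x'_i=\max\{x_k:\operatorname{dist}(k,i)\le1\}+1$, $x'_j=x_j$ for $j\ne i$ (dist the graph distance), and then $(T_ix)_j=x'_j-\max_kx'_k$. An $i$-ordering is an enumeration $a^{(i)}=(a^{(i)}_1,\dots,a^{(i)}_{|V|-1})$ of $V\setminus\{i\}$ such that $a^{(i)}_1$ is a neighbour of $i$ and each $a^{(i)}_k$ is at graph distance $1$ from $\{i,a^{(i)}_1,\dots,a^{(i)}_{k-1}\}$. Let $S^{(i)}=\{y\in S:y_i=0\}$ and $x^{(i)}=T_{a^{(i)}_{|V|-1}}\cdots T_{a^{(i)}_1}y$ for $y\in S^{(i)}$ (e.g. $y\equiv0$). $\|\mu-\nu\|_{TV}=\sup_{B\subset S}|\mu(B)-\nu(B)|$. *)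

From HB Require Import structures.
From mathcomp Require Import all_boot all_order all_algebra.
From mathcomp Require Import all_classical all_reals all_analysis.
Set Implicit Arguments. Unset Strict Implicit. Unset Printing Implicit Defensive.
Import Order.TTheory GRing.Theory Num.Theory.
Local Open Scope ring_scope.
Local Open Scope classical_set_scope.

Definition simple_graph (V : finType) (adj : rel V) : Prop :=
  symmetric adj /\ irreflexive adj.
Definition connected_graph (V : finType) (adj : rel V) : Prop :=
  forall i j : V, connect adj i j.

Definition config (V : finType) := {ffun V -> int}.
Definition Sset (V : finType) : set (config V) :=
  [set x | forall j, x j <= 0].
Arguments Sset : clear implicits.

(* The map T_i. dist(k,i) <= 1 iff k = i or k adjacent to i. *)
Definition Tmap (V : finType) (adj : rel V) (i : V) (x : config V) : config V :=
  let m := \big[Order.max/x i]_(k | adj i k) x k in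
  let x' := [ffun j => if j == i then m + 1 else x j] in
  let M := \big[Order.max/x' i]_(k : V) x' k in
  [ffun j => x' j - M].

Definition Mker (R : realType) (V : finType) (adj : rel V) (p : V -> R)
  (x y : config V) : R :=
  \sum_(i : V | Tmap adj i x == y) p i.

(* n-step kernel M^n, via M^(n+1)(x,y) = sum_z M(x,z) M^n(z,y)
   = sum_i p(i) M^n(T_i x, y). *)
Fixpoint Mpow (R : realType) (V : finType) (adj : rel V) (p : V -> R)
  (n : nat) (x y : config V) : R :=
  match n with
  | 0 => if x == y then 1 else 0
  | n'.+1 => \sum_(i : V) p i * Mpow adj p n' (Tmap adj i x) y
  end.

(* i-ordering: an enumeration a_1..a_{|V|-1} of V \ {i} with a_1 a neighbour of
   i and each a_k adjacent to (i.e. at distance 1 from) {i, a_1, ..., a_{k-1}}. *)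
Definition i_ordering (V : finType) (adj : rel V) (i : V) (a : seq V) : Prop :=
  [/\ uniq a, (forall j, (j \in a) = (j != i)) &
      forall k, (k < size a)%N ->
        exists2 j, j \in i :: take k a & adj j (nth i a k)].

Definition xi_of (V : finType) (adj : rel V) (a : seq V) (y : config V) :
  config V := foldl (fun z j => Tmap adj j z) y a.

Definition mass (R : realType) (V : finType) (f : config V -> R)
  (B : set (config V)) : \bar R :=
  (\esum_(y in B) (f y)%:E)%R.

Definition tv_dist (R : realType) (V : finType) (f g : config V -> R) : \bar R :=
  ereal_sup [set `|(mass f B - mass g B)%E|%E | B in [set B | B `<=` Sset V]].

Definition invariant_prob (R : realType) (V : finType) (adj : rel V)
  (p : V -> R) (pi : config V -> R) : Prop :=
  [/\ forall x, 0 <= pi x,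
      forall x, ~ Sset V x -> pi x = 0,
      mass pi (Sset V) = 1%E &
      forall y, Sset V y ->
        (pi y)%:E = (\esum_(x in Sset V) (pi x * Mker adj p x y)%:E)%R].

From HB Require Import structures.
From mathcomp Require Import all_boot all_order all_algebra.
From mathcomp Require Import all_classical all_reals all_analysis.
From mathcomp Require Import lra zify.
Set Implicit Arguments. Unset Strict Implicit. Unset Printing Implicit Defensive.
Import Order.TTheory GRing.Theory Num.Theory.
Local Open Scope ring_scope.
Local Open Scope classical_set_scope.

(* Both mu = M^s(x, .) and pi charge each of the |V| points x^(i) with mass at
   least alpha': mu by hypothesis, and pi because pi M^s = pi.  These points are
   pairwise distinct, since x^(i) attains its strict minimum exactly at i.  Hence
   for every B, both mu(B) and pi(B) lie in [alpha' k, 1 - alpha' (|V| - k)],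
   where k is the number of points x^(i) in B, so that
   |mu(B) - pi(B)| <= 1 - alpha' |V| <= 1 - alpha'^2 |V|. *)

Lemma sum_pred1_seq (R : nmodType) (T : eqType) (F : T -> R) (W : seq T) a :
  uniq W -> \sum_(w <- W) (if a == w then F w else 0) = if a \in W then F a else 0.
Proof.
elim: W => [|b W IH] /=; first by rewrite big_nil.
case/andP=> bW uW; rewrite big_cons IH // inE.
case: (eqVneq a b) => [->|ab] /=; first by rewrite (negPf bW) addr0.
by rewrite add0r.
Qed.

Lemma abse_sub_le_width (R : realType) (m1 m2 : \bar R) (l u : R) :
  (l%:E <= m1 <= u%:E)%E -> (l%:E <= m2 <= u%:E)%E ->
  (`|(m1 - m2)%E|%E <= (u - l)%:E)%E.
Proof.
case: m1 => [r1| |]; rewrite ?leey ?leNye ?andbF ?andFb //.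
case: m2 => [r2| |]; rewrite ?leey ?leNye ?andbF ?andFb //.
rewrite !lee_fin => /andP[l1 u1] /andP[l2 u2].
change (`|(r1 - r2)%:E|%E <= (u - l)%:E)%E.
by rewrite abse_EFin lee_fin ler_norml; apply/andP; split; lra.
Qed.

Section FiniteApproximation.
Variables (R : realType) (T : choiceType) (A : set T) (f : T -> R).

Lemma sum_seq_le_esum (Z : seq T) :
  uniq Z -> (forall z, z \in Z -> A z) ->
  ((\sum_(z <- Z) f z)%:E <= \esum_(z in A) (f z)%:E)%E.
Proof.
move=> uZ ZA; apply: esum_ge; exists [set` Z].
  by split; [exact: finite_seq | move=> z /= zZ; exact: ZA].
by rewrite -sumEFin fsbig_seq.
Qed.

Lemma esum_le_seq (u : R) :
  (forall Z, uniq Z -> (forall z, z \in Z -> A z) -> \sum_(z <- Z) f z <= u) ->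
  (\esum_(z in A) (f z)%:E <= u%:E)%E.
Proof.
move=> sumZ; apply: ge_ereal_sup => _ [F [finF FA] <-].
rewrite fsbig_finite // sumEFin lee_fin; apply: sumZ; first exact: finmap.fset_uniq.
by move=> z; rewrite in_fset_set // => /set_mem /FA.
Qed.

End FiniteApproximation.

Section AnchoredMass.
Variables (R : realType) (T : choiceType) (D : set T).

Definition subprob_on (f : T -> R) :=
  forall Z, uniq Z -> (forall z, z \in Z -> D z) -> \sum_(z <- Z) f z <= 1.

Variables (I : finType) (c : I -> T) (alpha : R).
Hypotheses (c_inj : injective c) (cD : forall i, D (c i)).

Lemma esum_anchors_bounds (f : T -> R) (B : set T) :
  subprob_on f -> (forall i, alpha <= f (c i)) -> B `<=` D ->
  ((alpha * #|[pred i | c i \in B]|%:R)%:E <= \esum_(z in B) (f z)%:E)%E /\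
  (\esum_(z in B) (f z)%:E <= (1 - alpha * #|[pred i | c i \notin B]|%:R)%:E)%E.
Proof.
move=> f_sub f_ge BD.
have anchors_sum (P : pred I) :
    alpha * #|P|%:R <= \sum_(z <- [seq c i | i <- index_enum I & P i]) f z.
  by rewrite big_map big_filter mulr_natr -sumr_const; apply: ler_sum.
have anchors_uniq (P : pred I) : uniq [seq c i | i <- index_enum I & P i].
  by rewrite map_inj_uniq // filter_uniq // index_enum_uniq.
split.
  apply: le_trans (sum_seq_le_esum f (anchors_uniq [pred i | c i \in B]) _).
    by rewrite lee_fin anchors_sum.
  by move=> z /mapP[i]; rewrite mem_filter => /andP[/set_mem iB _] ->.
apply: esum_le_seq => Z uZ ZB.
pose Zout := [seq c i | i <- index_enum I & c i \notin B].
suff : \sum_(z <- Z ++ Zout) f z <= 1.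
  by rewrite big_cat /=; have := anchors_sum [pred i | c i \notin B]; lra.
apply: f_sub.
- rewrite cat_uniq uZ anchors_uniq andbT /=; apply/hasPn => z /mapP[i].
  rewrite mem_filter => /andP[iB _] ->; apply/negP => /ZB /mem_set.
  by rewrite (negPf iB).
- by move=> z; rewrite mem_cat => /orP[/ZB/BD // | /mapP[i _ ->]].
Qed.

Lemma tv_le_common_anchors (f g : T -> R) :
  subprob_on f -> subprob_on g ->
  (forall i, alpha <= f (c i)) -> (forall i, alpha <= g (c i)) ->
  (ereal_sup [set `|(\esum_(z in B) (f z)%:E - \esum_(z in B) (g z)%:E)%E|%E
              | B in [set B | B `<=` D]] <= (1 - alpha * #|I|%:R)%:E)%E.
Proof.
move=> f_sub g_sub f_ge g_ge; apply: ge_ereal_sup => _ [B BD <-].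
have [lf uf] := esum_anchors_bounds f_sub f_ge BD.
have [lg ug] := esum_anchors_bounds g_sub g_ge BD.
apply: le_trans (abse_sub_le_width (introT andP (conj lf uf))
                                   (introT andP (conj lg ug))) _.
by rewrite -(cardC [pred i | c i \in B]) natrD lee_fin; lra.
Qed.

End AnchoredMass.

Section Chain.
Variables (R : realType) (V : finType) (adj : rel V) (p : V -> R).
Hypothesis p_ge0 : forall i, 0 <= p i.

Lemma Tmap_le0 i (x : config V) j : Tmap adj i x j <= 0.
Proof.
rewrite /Tmap !ffunE subr_le0; apply: le_trans (le_bigmax _ _ j).
by rewrite ffunE.
Qed.

Lemma Mpow_ge0 n x y : 0 <= Mpow adj p n x y.
Proof.
elim: n x => [|n IH] x /=; first by case: ifP.
by apply: sumr_ge0 => i _; apply: mulr_ge0.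
Qed.

Lemma Mpow_succE_seq n z y (W : seq (config V)) :
  uniq W -> (forall i, Tmap adj i z \in W) ->
  Mpow adj p n.+1 z y = \sum_(w <- W) Mker adj p z w * Mpow adj p n w y.
Proof.
move=> uW TzW /=; symmetry.
under eq_bigr do rewrite /Mker mulr_suml big_mkcond.
rewrite exchange_big /=; apply: eq_bigr => i _.
have := sum_pred1_seq (fun w => p i * Mpow adj p n w y) (Tmap adj i z) uW.
rewrite TzW => <-; apply: eq_bigr => w _.
by case: ifP; rewrite ?mul0r.
Qed.

Lemma Mpow_sum_le1 n x (Z : seq (config V)) :
  \sum_(i : V) p i = 1 -> uniq Z -> \sum_(y <- Z) Mpow adj p n x y <= 1.
Proof.
move=> p_sum1 uZ; elim: n x => [|n IH] x /=.
  by rewrite sum_pred1_seq //; case: ifP.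
rewrite exchange_big /= -p_sum1; apply: ler_sum => i _.
by rewrite -mulr_sumr ler_piMr.
Qed.

Section Invariance.
Variable pi : config V -> R.
Hypotheses (pi_ge0 : forall x, 0 <= pi x)
  (pi_subinv : forall w, Sset V w -> forall Z, uniq Z ->
     (forall z, z \in Z -> Sset V z) -> \sum_(z <- Z) pi z * Mker adj p z w <= pi w).

Lemma subinvariant_Mpow n y Z :
  Sset V y -> uniq Z -> (forall z, z \in Z -> Sset V z) ->
  \sum_(z <- Z) pi z * Mpow adj p n z y <= pi y.
Proof.
elim: n y Z => [|n IH] y Z Sy uZ SZ /=.
  under eq_bigr do rewrite (fun_if (fun t => pi _ * t)) mulr1 mulr0 eq_sym.
  by rewrite sum_pred1_seq //; case: ifP.
pose W := undup [seq Tmap adj i z | z <- Z, i <- index_enum V].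
have uW : uniq W by apply: undup_uniq.
have SW w : w \in W -> Sset V w.
  by rewrite mem_undup => /allpairsP[[z i] [_ _ ->]] j; apply: Tmap_le0.
have TzW z i : z \in Z -> Tmap adj i z \in W.
  by move=> zZ; rewrite mem_undup; apply: allpairs_f; rewrite ?mem_index_enum.
apply: le_trans (IH y W Sy uW SW).
rewrite big_seq.
rewrite (eq_bigr _ (fun z zZ => congr1 _ (Mpow_succE_seq _ _ uW (TzW z ^~ zZ)))).
rewrite -big_seq; under eq_bigr do rewrite mulr_sumr.
rewrite exchange_big /= big_seq [leRHS]big_seq; apply: ler_sum => w wW.
under eq_bigr do rewrite mulrA.
rewrite -mulr_suml ler_wpM2r ?Mpow_ge0 //.
by apply: pi_subinv => //; apply: SW.
Qed.

Lemma subinvariant_anchor_ge n (w : config V) (alpha : R) :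
  0 < alpha -> Sset V w -> (forall x, Sset V x -> alpha <= Mpow adj p n x w) ->
  mass pi (Sset V) = 1%E -> alpha <= pi w.
Proof.
move=> alpha_gt0 Sw Mn_ge pi_mass1.
suff : (1 <= (pi w / alpha)%:E)%E by rewrite lee_fin ler_pdivlMr // mul1r.
rewrite -pi_mass1; apply: esum_le_seq => Z uZ SZ.
rewrite ler_pdivlMr // mulr_suml.
apply: le_trans (subinvariant_Mpow n Sw uZ SZ).
rewrite !big_seq; apply: ler_sum => z zZ.
by apply: ler_wpM2l; [exact: pi_ge0 | exact: Mn_ge (SZ z zZ)].
Qed.

End Invariance.
End Chain.

Section Orderings.
Variables (V : finType) (adj : rel V).
Hypothesis adj_sym : symmetric adj.

Lemma Sset_xi_of a (y : config V) : Sset V y -> Sset V (xi_of adj a y).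
Proof.
rewrite /xi_of; elim: a y => [|b a IH] y Sy //=.
by apply: IH => j; apply: Tmap_le0.
Qed.

(* T_a raises z a above the value at a neighbour j0, hence above z i. *)
Lemma Tmap_strict_min i a (z : config V) (P : seq V) j0 :
  a != i -> {in P, forall j, z i < z j} -> j0 \in i :: P -> adj j0 a ->
  {in a :: P, forall j, Tmap adj a z i < Tmap adj a z j}.
Proof.
move=> ai zP j0P j0a j jP; rewrite /Tmap !ffunE ltrD2r eq_sym (negPf ai).
have zij0 : z i <= z j0 by move: j0P; rewrite inE => /orP[/eqP-> // | /zP/ltW].
case: ifPn => [_|ja].
  have : z j0 <= \big[Order.max/z a]_(k | adj a k) z k.
    by apply/bigmax_geP; right; exists j0; rewrite // adj_sym.
  by lia.
by apply: zP; move: jP; rewrite inE (negPf ja).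
Qed.

Lemma foldl_Tmap_strict_min i r P (z : config V) :
  {in P, forall j, z i < z j} -> i \notin r ->
  (forall k, (k < size r)%N ->
     exists2 j, j \in i :: P ++ take k r & adj j (nth i r k)) ->
  {in P ++ r, forall j, (foldl (fun z j => Tmap adj j z) z r) i <
                        (foldl (fun z j => Tmap adj j z) z r) j}.
Proof.
elim: r P z => [|a r IH] P z zP ir adj_prefix /=; first by rewrite cats0.
rewrite -cat_rcons; apply: IH.
- have [j0 j0P j0a] := adj_prefix 0%N erefl; rewrite /= cats0 in j0P.
  have ai : a != i by apply: contraNneq ir => ->; rewrite mem_head.
  by move=> j; rewrite mem_rcons; apply: Tmap_strict_min ai zP j0P j0a j.
- by apply: contra ir; rewrite inE => ->; rewrite orbT.
- move=> k kr; have [j0 j0P j0a] := adj_prefix k.+1 kr.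
  by exists j0; rewrite // cat_rcons.
Qed.

Lemma xi_of_strict_min i a (y : config V) :
  i_ordering adj i a -> forall j, j != i -> xi_of adj a y i < xi_of adj a y j.
Proof.
case=> _ mem_a adj_prefix j ji.
by apply: (@foldl_Tmap_strict_min i a [::]); rewrite //= ?mem_a ?eqxx.
Qed.

Lemma xi_of_inj (ord : V -> seq V) (y0 : V -> config V) :
  (forall i, i_ordering adj i (ord i)) ->
  injective (fun i => xi_of adj (ord i) (y0 i)).
Proof.
move=> ord_ok i j /= xij; apply/eqP/negPn/negP => ij.
have lt_ji := xi_of_strict_min (y0 j) (ord_ok j) ij.
have ji : j != i by rewrite eq_sym.
have lt_ij := xi_of_strict_min (y0 i) (ord_ok i) ji.
by rewrite xij in lt_ij; have := lt_trans lt_ij lt_ji; rewrite ltxx.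
Qed.

End Orderings.

Theorem mainTheorem6 (R : realType) (V : finType) (adj : rel V)
  (p : V -> R) (ord : V -> seq V) (y0 : V -> config V)
  (alpha' : R) (pi : config V -> R) :
  simple_graph adj -> connected_graph adj ->
  (forall i, 0 < p i) -> \sum_(i : V) p i = 1 ->
  (forall i, i_ordering adj i (ord i)) ->
  (forall i, Sset V (y0 i) /\ y0 i i = 0) ->
  0 < alpha' ->
  (forall x, Sset V x -> forall i,
     alpha' <= Mpow adj p (3 * (#|V| - 1)) x (xi_of adj (ord i) (y0 i))) ->
  invariant_prob adj p pi ->
  forall x, Sset V x ->
    (tv_dist (Mpow adj p (3 * (#|V| - 1)) x) pi
       <= (1 - alpha' ^+ 2 * #|V|%:R)%:E)%E.
Proof.
move=> [adj_sym _] _ p_gt0 p_sum1 ord_ok y0S alpha_gt0 Ms_ge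
  [pi_ge0 _ pi_mass1 pi_inv] x Sx.
set s := (3 * (#|V| - 1))%N in Ms_ge *.
pose c i := xi_of adj (ord i) (y0 i).
have cS i : Sset V (c i) by apply: Sset_xi_of; case: (y0S i).
have p_ge0 i : 0 <= p i by apply: ltW.
have mu_sub : subprob_on (Sset V) (Mpow adj p s x).
  by move=> Z uZ _; apply: Mpow_sum_le1.
have pi_sub : subprob_on (Sset V) pi.
  by move=> Z uZ SZ; rewrite -lee_fin -pi_mass1; apply: sum_seq_le_esum.
have pi_subinv w : Sset V w -> forall Z, uniq Z -> (forall z, z \in Z -> Sset V z) ->
    \sum_(z <- Z) pi z * Mker adj p z w <= pi w.
  by move=> Sw Z uZ SZ; rewrite -lee_fin pi_inv //; apply: sum_seq_le_esum.
have pi_ge i : alpha' <= pi (c i).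
  apply: (subinvariant_anchor_ge p_ge0 pi_ge0 pi_subinv alpha_gt0 (cS i)) => //.
  by move=> z Sz; apply: Ms_ge.
have c_inj : injective c by apply: xi_of_inj.
apply: (le_trans (tv_le_common_anchors c_inj cS mu_sub pi_sub (Ms_ge x Sx) pi_ge)).
rewrite lee_fin lerB // !mulr_natr -!sumr_const; apply: ler_sum => i _.
have alpha_le1 : alpha' <= 1.
  apply: (le_trans (Ms_ge x Sx i)).
  by have := Mpow_sum_le1 adj p_ge0 s x p_sum1 (erefl : uniq [:: c i]); rewrite big_seq1.
by rewrite expr2; apply: ler_piMr => //; apply: ltW.
Qed.
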